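(* Let $\mathcal{X}$ be a set, $\mathcal{D}$ a distribution on $\mathcal{X}\times[0,1]^N$, $f,f^\star:\mathcal{X}\to[0,1]^N$ two functions, $q:\mathcal{X}\times[0,1]^N\to\Delta(\mathcal{S})$ a stochastic policy and $\pi:\mathcal{X}\times[0,1]^N\to\mathcal{S}$ a deterministic policy. Then $$\Big|\mathbb{E}_{(x,r)\sim\mathcal{D}}\big[R(\pi(x,r),f(x),r)\big]-\mathbb{E}_{(x,r)\sim\mathcal{D}}\big[R(\pi(x,r),f^\star(x),r)\big]\Big|\le\sqrt{V(q,\pi)}\cdot\sqrt{\mathbb{E}_{(x,r)\sim\mathcal{D},\,S\sim q(x,r)}\Big[\sum_{i\in S}(f_i(x)-f_i^\star(x))^2\Big]}.$$
   Context: $N\ge K\ge1$ are integers and $\mathcal{S}$ is the collection of subsets $S\subseteq[N]$ with $1\le|S|\le K$; $\Delta(\mathcal{S})$ is the set of probability distributions on $\mathcal{S}$. For $S\in\mathcal{S}$, $v\in[0,1]^N$, $r\in[0,1]^N$, $R(S,v,r)=\frac{\sum_{i\in S}r_iv_i}{1+\sum_{i\in S}v_i}$. For $\rho\in\Delta(\mathcal{S})$, $w_i(\rho)=\sum_{S\in\mathcal{S}:\,i\in S}\rho(S)$. The dispersion is $V(q,\pi)=\mathbb{E}_{(x,r)\sim\mathcal{D}}\big[\sum_{i\in\pi(x,r)}\frac{1}{w_i(q(x,r))}\big]$ (with $1/0=+\infty$). *)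

From HB Require Import structures.
From mathcomp Require Import all_boot all_order all_algebra.
From mathcomp Require Import all_classical all_reals all_analysis.
Set Implicit Arguments. Unset Strict Implicit. Unset Printing Implicit Defensive.
Import Order.TTheory GRing.Theory Num.Theory.
Local Open Scope classical_set_scope.
Local Open Scope ring_scope.

Definition validS (N K : nat) (S : {set 'I_N}) : bool := (1 <= #|S| <= K)%N.

(* rho ∈ Δ(𝒮): a probability distribution on {set 'I_N} supported on 𝒮. *)
Definition is_distS (R : realType) (N K : nat) (rho : {ffun {set 'I_N} -> R}) : Prop :=
  (forall S, 0 <= rho S) /\ (forall S, ~~ validS K S -> rho S = 0) /\
  \sum_(S : {set 'I_N}) rho S = 1.

Definition Rev (R : realType) (N : nat) (S : {set 'I_N}) (v r : 'I_N -> R) : R :=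
  (\sum_(i in S) r i * v i) / (1 + \sum_(i in S) v i).

Definition wgt (R : realType) (N : nat) (rho : {ffun {set 'I_N} -> R}) (i : 'I_N) : R :=
  \sum_(S : {set 'I_N} | i \in S) rho S.

Definition inv_oo (R : realType) (x : R) : \bar R :=
  if x == 0 then +oo%E else (x^-1)%:E.

Definition dispersion (R : realType) d (X : measurableType d) (N : nat)
  (D : probability (X * N.-tuple R)%type R)
  (q : X * N.-tuple R -> {ffun {set 'I_N} -> R}) (pi : X * N.-tuple R -> {set 'I_N}) : \bar R :=
  (\int[D]_z (\sum_(i in pi z) inv_oo (wgt (q z) i)))%E.

From HB Require Import structures.
From mathcomp Require Import all_boot all_order all_algebra.
From mathcomp Require Import all_classical all_reals all_analysis.
From mathcomp Require Import measurable_realfun ring lra.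
Import Order.TTheory GRing.Theory Num.Theory.
Local Open Scope classical_set_scope.
Local Open Scope ring_scope.

(* With prices in [0, 1] the MNL revenue [Rev S v r] is 1-Lipschitz in [v]
   for the l^1 norm on [S].  By AM-GM, for every [t > 0],
     |v_i - v'_i| <= t / (2 w_i) + w_i (v_i - v'_i)^2 / (2 t),
   where [w_i] is the probability that [i] belongs to [S ~ q].  Summed over
   [pi(x, r)], the first terms give [t / 2] times the dispersion, and since
   [sum_i w_i x_i = E_(S ~ q) [sum_(i in S) x_i]] the second ones give [1 / (2 t)]
   times the quadratic error.  Integrating and optimizing over [t] yields the
   product of the two square roots. *)

Set Implicit Arguments.
Unset Strict Implicit.
Unset Printing Implicit Defensive.

Section revenue_lipschitz.
Variables (R : realType) (N : nat).
Implicit Types (S : {set 'I_N}) (v w r : 'I_N -> R).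

Lemma Rev_numer_bounds S v r : (forall i, 0 <= v i) -> (forall i, 0 <= r i <= 1) ->
  0 <= \sum_(i in S) r i * v i <= \sum_(i in S) v i.
Proof.
move=> v0 r01; apply/andP; split.
  by apply: sumr_ge0 => i _; have /andP[? ?] := r01 i; apply: mulr_ge0.
by apply: ler_sum => i _; have /andP[? ?] := r01 i; exact: ler_piMl.
Qed.

Lemma Rev_ge0_le1 S v r : (forall i, 0 <= v i) -> (forall i, 0 <= r i <= 1) ->
  0 <= Rev S v r <= 1.
Proof.
move=> v0 r01; have /andP[A0 AB] := Rev_numer_bounds S v0 r01.
have B0 : 0 <= \sum_(i in S) v i by apply: sumr_ge0.
by rewrite /Rev divr_ge0 ?ler_pdivrMr ?mul1r; lra.
Qed.

Lemma Rev_lipschitz S v w r :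
  (forall i, 0 <= v i) -> (forall i, 0 <= w i) -> (forall i, 0 <= r i <= 1) ->
  `|Rev S v r - Rev S w r| <= \sum_(i in S) `|v i - w i|.
Proof.
move=> v0 w0 r01.
have /andP[y0 y1] := Rev_ge0_le1 S w0 r01.
set y := Rev S w r in y0 y1 *.
set B := \sum_(i in S) v i.
have B0 : 0 <= B by apply: sumr_ge0.
(* The difference is [sum_(i in S) (v i - w i) (r i - y) / (1 + B)], where
   [|r i - y| <= 1 <= 1 + B]. *)
have -> : Rev S v r - y = \sum_(i in S) (v i - w i) * ((r i - y) / (1 + B)).
  under eq_bigr do rewrite mulrA; rewrite -mulr_suml.
  have -> : \sum_(i in S) (v i - w i) * (r i - y) =
      \sum_(i in S) r i * v i - y * B - (\sum_(i in S) r i * w i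
        - y * \sum_(i in S) w i).
    rewrite /B !mulr_sumr -!sumrB; apply: eq_bigr => i _; ring.
  have -> : \sum_(i in S) r i * w i - y * \sum_(i in S) w i = y.
    by rewrite /y /Rev; field; rewrite lt0r_neq0 // ltr_pwDl // sumr_ge0.
  by rewrite /Rev -/B; field; rewrite lt0r_neq0 // ltr_pwDl.
apply: (le_trans (ler_norm_sum _ _ _)); apply: ler_sum => i _.
rewrite normrM ler_piMr // normrM normfV [`|1 + B|]ger0_norm; last lra.
have /andP[r0 r1] := r01 i.
by rewrite ler_pdivrMr ?mul1r ?ler_norml; lra.
Qed.

End revenue_lipschitz.

Section AMGM.
Variable R : realType.

Lemma normr_le_AMGM (t w x : R) : 0 < t -> 0 < w ->
  `|x| <= t / 2 * w^-1 + w * x ^+ 2 / (2 * t).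
Proof.
move=> t0 w0; rewrite -subr_ge0.
have -> : t / 2 * w^-1 + w * x ^+ 2 / (2 * t) - `|x| =
    (t - w * `|x|) ^+ 2 / (2 * t * w).
  by rewrite -(real_normK (num_real x)); field; apply/andP; split; lra.
by apply: divr_ge0; [exact: sqr_ge0 | nra].
Qed.

Lemma le_sqrt_mul_AMGM (x A B : R) : 0 <= A -> 0 <= B ->
  (forall t, 0 < t -> 2 * x <= t * A + B / t) -> x <= Num.sqrt A * Num.sqrt B.
Proof.
move=> A0 B0 AMGM.
have [a a0 eA] : exists2 a, 0 <= a & A = a ^+ 2.
  by exists (Num.sqrt A); rewrite ?sqrtr_ge0 ?sqr_sqrtr.
have [b b0 eB] : exists2 b, 0 <= b & B = b ^+ 2.
  by exists (Num.sqrt B); rewrite ?sqrtr_ge0 ?sqr_sqrtr.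
subst A B; rewrite !sqrtr_sqr !ger0_norm //.
have [x0 | x_gt0] := lerP x 0; first by rewrite (le_trans x0) ?mulr_ge0.
(* The optimal choice is [t = b / a]; if [a] or [b] vanishes, a large or a
   small [t] contradicts [x > 0]. *)
have b2_ge0 := sqr_ge0 b.
have [a_eq0 | a_neq0] := eqVneq a 0.
  have t_gt0 : 0 < b ^+ 2 / x + 1 by rewrite ltr_wpDl ?divr_ge0 // ltW.
  have := AMGM _ t_gt0; rewrite a_eq0 expr0n /= mulr0 add0r ler_pdivlMr //.
  have -> : 2 * x * (b ^+ 2 / x + 1) = 2 * b ^+ 2 + 2 * x by field; rewrite gt_eqF.
  lra.
have a_gt0 : 0 < a by rewrite lt_def a_neq0.
have [b_eq0 | b_neq0] := eqVneq b 0.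
  have := AMGM (x / a ^+ 2); rewrite b_eq0 expr0n /= mul0r addr0 divfK ?sqrf_eq0 //.
  by rewrite divr_gt0 ?exprn_gt0 //; lra.
have b_gt0 : 0 < b by rewrite lt_def b_neq0.
have := AMGM (b / a) (divr_gt0 b_gt0 a_gt0).
have -> : b / a * a ^+ 2 + b ^+ 2 / (b / a) = 2 * (a * b).
  by field; apply/andP; split.
lra.
Qed.

End AMGM.

Section weights.
Variables (R : realType) (N : nat).

Lemma inv_oo_ge0 (x : R) : 0 <= x -> (0 <= inv_oo x)%E.
Proof. by move=> x0; rewrite /inv_oo; case: ifP => // _; rewrite lee_fin invr_ge0. Qed.

Lemma ler_sum_setT (S : {set 'I_N}) (y : 'I_N -> R) :
  (forall i, 0 <= y i) -> \sum_(i in S) y i <= \sum_i y i.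
Proof.
by move=> y0; rewrite big_mkcond /=; apply: ler_sum => i _; case: (i \in S).
Qed.

Lemma sum_normr_le_AMGM (S : {set 'I_N}) (w x : 'I_N -> R) (t : R) :
  0 < t -> (forall i, 0 <= w i) ->
  ((\sum_(i in S) `|x i|)%:E <= (t / 2)%:E * (\sum_(i in S) inv_oo (w i))
     + ((\sum_(i in S) w i * x i ^+ 2) / (2 * t))%:E)%E.
Proof.
move=> t0 w0; case: (boolP [exists i in S, w i == 0]).
  move=> /existsP[i /andP[iS /eqP wi0]].
  have -> : (\sum_(j in S) inv_oo (w j) = +oo)%E.
    rewrite (bigD1 i) //= {1}/inv_oo wi0 eqxx addye //.
    by rewrite gt_eqF // (lt_le_trans ltNy0) // sume_ge0 // => j _; exact: inv_oo_ge0.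
  by rewrite muleC gt0_mulye ?lte_fin ?divr_gt0 // addye ?leey.
rewrite negb_exists_in => /forallP wS.
have wS_gt0 i : i \in S -> 0 < w i by move=> iS; rewrite lt_def (implyP (wS i) iS) w0.
have -> : (\sum_(i in S) inv_oo (w i) = (\sum_(i in S) (w i)^-1)%:E)%E.
  rewrite -sumEFin; apply: eq_bigr => i iS.
  by rewrite /inv_oo gt_eqF // wS_gt0.
rewrite -EFinM -EFinD lee_fin mulr_sumr mulr_suml -big_split /=.
by apply: ler_sum => i iS; apply: normr_le_AMGM => //; exact: wS_gt0.
Qed.

Lemma sum_wgtM (rho : {ffun {set 'I_N} -> R}) (x : 'I_N -> R) :
  \sum_i wgt rho i * x i = \sum_S rho S * \sum_(i in S) x i.
Proof.
rewrite /wgt; under eq_bigr do rewrite mulr_suml big_mkcond.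
under [RHS]eq_bigr do rewrite mulr_sumr big_mkcond.
by rewrite exchange_big; apply: eq_bigr => S _; apply: eq_bigr => i _; case: (i \in S).
Qed.

Lemma sum_dist_sum_le (rho : {ffun {set 'I_N} -> R}) (x : 'I_N -> R) :
  (forall S, 0 <= rho S) -> \sum_S rho S = 1 -> (forall i, 0 <= x i <= 1) ->
  \sum_S rho S * \sum_(i in S) x i <= N%:R.
Proof.
move=> rho0 rho1 x01.
have x_le_N (S : {set 'I_N}) : \sum_(i in S) x i <= N%:R.
  apply: (@le_trans _ _ (\sum_i x i)).
    by apply: ler_sum_setT => i; have /andP[] := x01 i.
  rewrite -[N in N%:R]card_ord -sumr_const.
  by apply: ler_sum => i _; have /andP[] := x01 i.
apply: (@le_trans _ _ (\sum_S rho S * N%:R)).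
  by apply: ler_sum => S _; apply: ler_wpM2l.
by rewrite -mulr_suml rho1 mul1r.
Qed.

End weights.

Section measurability.
Context d (T : measurableType d) (R : realType).

Lemma measurable_sum_cond (I : Type) (s : seq I) (P : pred I) (h : I -> T -> R) :
  (forall i, measurable_fun setT (h i)) ->
  measurable_fun setT (fun z => \sum_(i <- s | P i) h i z).
Proof. by move=> mh; under eq_fun do rewrite -big_filter; exact: measurable_sum. Qed.

Lemma emeasurable_sum_cond (I : Type) (s : seq I) (P : pred I) (h : I -> T -> \bar R) :
  (forall i, measurable_fun setT (h i)) ->
  measurable_fun setT (fun z => \sum_(i <- s | P i) h i z)%E.
Proof. by move=> mh; under eq_fun do rewrite -big_filter; exact: emeasurable_sum. Qed.

Lemma measurable_fun_fiberwise d' (U : measurableType d') (I : finType)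
    (pi : T -> I) (h : I -> T -> U) :
  (forall i, measurable (pi @^-1` [set i])) -> (forall i, measurable_fun setT (h i)) ->
  measurable_fun setT (fun z => h (pi z) z).
Proof.
move=> mpi mh _ B mB; rewrite setTI.
have -> : (fun z => h (pi z) z) @^-1` B =
    \bigcup_(i in setT) (pi @^-1` [set i] `&` h i @^-1` B).
  by apply/seteqP; split => [z Bz | z [i _ [/= <-]]] //; exists (pi z).
apply: fin_bigcup_measurable => [|i _]; first exact: finite_finset.
by apply: measurableI => //; rewrite -[_ @^-1` _]setTI; exact: mh.
Qed.

Lemma measurable_funV (g : T -> R) : measurable_fun setT g -> (forall z, g z != 0) ->
  measurable_fun setT (fun z => (g z)^-1).
Proof.
move=> mg g_neq0; apply: (@measurable_comp _ _ _ _ _ _ [set r : R | r != 0]) => //.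
- exact: open_measurable.
- by move=> _ [z _ <-]; exact: g_neq0.
- apply: open_continuous_measurable_fun => //; apply/in_setP => r /= r_neq0.
  exact: inv_continuous.
Qed.

Lemma measurable_fun_inv_oo (g : T -> R) : measurable_fun setT g ->
  measurable_fun setT (fun z => inv_oo (g z)).
Proof.
move=> mg; have mg0 : measurable_fun setT (fun z => g z == 0).
  by apply: measurable_fun_eqr => //; exact: measurable_cst.
(* Replacing the zeros of [g] by [1] makes the inverse measurable without
   changing [inv_oo (g z)]. *)
have -> : (fun z => inv_oo (g z)) =
    (fun z => if g z == 0 then +oo%E else ((if g z == 0 then 1 else g z)^-1)%:E).
  by apply/funext => z; rewrite /inv_oo; case: ifP.
apply: measurable_fun_ifT => //; apply/measurable_EFinP; apply: measurable_funV.
  by apply: measurable_fun_ifT => //; exact: measurable_cst.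
by move=> z; case: ifPn => // _; exact: oner_neq0.
Qed.

End measurability.

Section revenue_gap.
Variables (R : realType) (N : nat) (d : measure_display) (X : measurableType d).
Variable D : probability (X * N.-tuple R)%type R.
Hypothesis unit_prices : D [set z | forall i : 'I_N, 0 <= tnth z.2 i <= 1] = 1%E.
Variable pi : X * N.-tuple R -> {set 'I_N}.
Hypothesis mpi : forall S, measurable (pi @^-1` [set S]).

Lemma measurable_price (i : 'I_N) : measurable_fun setT (fun z : X * N.-tuple R => tnth z.2 i).
Proof. exact: measurableT_comp (measurable_tnth i) measurable_snd. Qed.

Lemma ae_unit_prices : {ae D, forall z, forall i : 'I_N, 0 <= tnth z.2 i <= 1}.
Proof.
have mE : measurable [set z : X * N.-tuple R | forall i : 'I_N, 0 <= tnth z.2 i <= 1].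
  rewrite [A in measurable A](_ : _ = \bigcap_(i in setT)
      ((fun z : X * N.-tuple R => tnth z.2 i) @^-1` `[0, 1]%classic)).
    apply: fin_bigcap_measurable => [|i _]; first exact: finite_finset.
    by rewrite -[A in measurable A]setTI; exact: measurable_price.
  apply/seteqP; split => z /= z01 i; last by have := z01 i I; rewrite /= in_itv.
  by move=> _; rewrite /= in_itv; exact: z01.
exists (~` [set z | forall i : 'I_N, 0 <= tnth z.2 i <= 1]); split => //.
- exact: measurableC.
- by rewrite probability_setC // unit_prices subee.
Qed.

Section valuations.
Variable v : X * N.-tuple R -> 'I_N -> R.
Hypotheses (mv : forall i, measurable_fun setT (fun z => v z i)) (v0 : forall z i, 0 <= v z i).

Lemma measurable_Rev : measurable_fun setT (fun z => Rev (pi z) (v z) (fun i => tnth z.2 i)).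
Proof.
apply: (measurable_fun_fiberwise (h := fun S z => Rev S (v z) (fun i => tnth z.2 i))) => // S.
apply: measurable_funM.
  apply: measurable_sum_cond => i; apply: measurable_funM => //.
  exact: measurable_price.
apply: measurable_funV.
  by apply: measurable_funD => //; exact: measurable_sum_cond.
by move=> z; rewrite lt0r_neq0 // ltr_pwDl // sumr_ge0.
Qed.

Lemma integrable_Rev :
  D.-integrable setT (EFin \o fun z => Rev (pi z) (v z) (fun i => tnth z.2 i)).
Proof.
apply/integrableP; split; first by apply/measurable_EFinP; exact: measurable_Rev.
apply: (@le_lt_trans _ _ (\int[D]_z (cst 1%E) z)%E); last first.
  by rewrite integral_cst // mul1e (le_lt_trans (probability_le1 _ _)) ?ltry.
apply: ae_ge0_le_integral => //.
- by apply: measurableT_comp => //; apply/measurable_EFinP; exact: measurable_Rev.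
- apply: filterS ae_unit_prices => z z01 _ /=.
  by rewrite lee_fin ger0_norm; have /andP[] := Rev_ge0_le1 (pi z) (v0 z) z01.
Qed.

End valuations.

Variables (v v' : X * N.-tuple R -> 'I_N -> R) (q : X * N.-tuple R -> {ffun {set 'I_N} -> R}).
Hypotheses (mv : forall i, measurable_fun setT (fun z => v z i))
  (mv' : forall i, measurable_fun setT (fun z => v' z i))
  (v0 : forall z i, 0 <= v z i) (v'0 : forall z i, 0 <= v' z i)
  (q0 : forall z S, 0 <= q z S) (mq : forall S, measurable_fun setT (fun z => q z S)).

Lemma dispersion_ge0 : (0 <= dispersion D q pi)%E.
Proof.
apply: integral_ge0 => z _; apply: sume_ge0 => i _; apply: inv_oo_ge0.
exact: sumr_ge0.
Qed.

Lemma sq_gap_ge0 z : 0 <= \sum_S q z S * \sum_(i in S) (v z i - v' z i) ^+ 2.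
Proof.
by apply: sumr_ge0 => S _; rewrite mulr_ge0 // sumr_ge0 // => i _; exact: sqr_ge0.
Qed.

Lemma measurable_sq_gap :
  measurable_fun setT (fun z => (\sum_S q z S * \sum_(i in S) (v z i - v' z i) ^+ 2)%:E).
Proof.
apply/measurable_EFinP; apply: measurable_sum_cond => S; apply: measurable_funM => //.
by apply: measurable_sum_cond => i; apply: measurable_funX; exact: measurable_funB.
Qed.

Lemma integral_sq_gap_lt_pinfty :
  (forall z, \sum_S q z S = 1) -> (forall z i, `|v z i - v' z i| <= 1) ->
  (\int[D]_z (\sum_S q z S * \sum_(i in S) (v z i - v' z i) ^+ 2)%:E < +oo)%E.
Proof.
move=> q1 gap_le1; apply: (@le_lt_trans _ _ (\int[D]_z (cst (N%:R)%:E) z)%E).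
  apply: ge0_le_integral => //.
  - by move=> z _; rewrite lee_fin sq_gap_ge0.
  - exact: measurable_sq_gap.
  - move=> z _; rewrite lee_fin; apply: sum_dist_sum_le => // i.
    have /andP[lo hi] : -1 <= v z i - v' z i <= 1 by rewrite -ler_norml.
    by rewrite sqr_ge0 /=; nra.
by rewrite integral_cst // lte_mul_pinfty // (le_lt_trans (probability_le1 _ _)) ?ltry.
Qed.

Lemma integral_Rev_gap_le (t : R) : 0 < t ->
  (\int[D]_z (`|Rev (pi z) (v z) (fun i => tnth z.2 i)
                - Rev (pi z) (v' z) (fun i => tnth z.2 i)|)%:E
   <= (t / 2)%:E * dispersion D q pi
      + ((2 * t)^-1)%:E * \int[D]_z (\sum_S q z S * \sum_(i in S) (v z i - v' z i) ^+ 2)%:E)%E.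
Proof.
move=> t0; have t2 : 0 <= t / 2 by lra.
have t2' : 0 <= (2 * t)^-1 by rewrite invr_ge0; lra.
have w0 z i : 0 <= wgt (q z) i by apply: sumr_ge0 => S _.
have mw i : measurable_fun setT (fun z => wgt (q z) i) by exact: measurable_sum_cond.
pose V z := (\sum_(i in pi z) inv_oo (wgt (q z) i))%E.
pose E z := \sum_S q z S * \sum_(i in S) (v z i - v' z i) ^+ 2.
have mV : measurable_fun setT V.
  apply: (measurable_fun_fiberwise
    (h := fun (S : {set 'I_N}) z => (\sum_(i in S) inv_oo (wgt (q z) i))%E)) => // S.
  by apply: emeasurable_sum_cond => i; exact: measurable_fun_inv_oo.
have mE : measurable_fun setT (fun z => (E z)%:E) by exact: measurable_sq_gap.
have V0 z : (0 <= V z)%E by apply: sume_ge0 => i _; exact: inv_oo_ge0.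
have E0 z : (0 <= (E z)%:E)%E by rewrite lee_fin sq_gap_ge0.
have Vt0 z : (0 <= (t / 2)%:E * V z)%E by rewrite mule_ge0 // lee_fin.
have Et0 z : (0 <= ((2 * t)^-1)%:E * (E z)%:E)%E by rewrite mule_ge0 // lee_fin.
rewrite /dispersion -/V -(ge0_integralZl_EFin D measurableT (fun z _ => V0 z) mV t2).
rewrite -(ge0_integralZl_EFin D measurableT (fun z _ => E0 z) mE t2').
rewrite -(ge0_integralD D measurableT (fun z _ => Vt0 z) (measurable_funeM _ mV)
  (fun z _ => Et0 z) (measurable_funeM _ mE)).
apply: ae_ge0_le_integral => //.
- apply/measurable_EFinP; apply: measurableT_comp => //.
  by apply: measurable_funB; exact: measurable_Rev.
- by move=> z _; rewrite adde_ge0 // mule_ge0 // lee_fin.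
- by apply: emeasurable_funD; exact: measurable_funeM.
apply: filterS ae_unit_prices => z z01 _.
apply: le_trans (_ : (\sum_(i in pi z) `|v z i - v' z i|)%:E <= _)%E.
  by rewrite lee_fin; exact: Rev_lipschitz.
apply: le_trans (sum_normr_le_AMGM _ (fun i => v z i - v' z i) t0 (w0 z)) _.
apply: leeD => //; rewrite -EFinM lee_fin [leRHS]mulrC ler_wpM2r //.
rewrite /E -sum_wgtM; apply: ler_sum_setT => i.
by rewrite mulr_ge0 ?sqr_ge0.
Qed.

Hypotheses (dispersion_fin : (dispersion D q pi < +oo)%E)
  (sq_gap_fin : (\int[D]_z (\sum_S q z S * \sum_(i in S) (v z i - v' z i) ^+ 2)%:E < +oo)%E).

Lemma Rintegral_Rev_gap_le (t : R) : 0 < t ->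
  2 * Rintegral D setT (fun z => `|Rev (pi z) (v z) (fun i => tnth z.2 i)
                                 - Rev (pi z) (v' z) (fun i => tnth z.2 i)|)
  <= t * fine (dispersion D q pi)
     + Rintegral D setT (fun z => \sum_S q z S * \sum_(i in S) (v z i - v' z i) ^+ 2) / t.
Proof.
move=> t0; have := integral_Rev_gap_le t0; rewrite /Rintegral.
set J := (\int[D]_z _)%E; set V := dispersion D q pi; set B := (\int[D]_z _)%E => JVB.
have V_num : V \is a fin_num by rewrite ge0_fin_numE // dispersion_ge0.
have B_num : B \is a fin_num.
  by rewrite ge0_fin_numE // integral_ge0 // => z _; rewrite lee_fin sq_gap_ge0.
have J_num : J \is a fin_num.
  rewrite ge0_fin_numE ?integral_ge0 // (le_lt_trans JVB) //.
  by rewrite -(fineK V_num) -(fineK B_num) -!EFinM -EFinD ltry.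
move: JVB; rewrite -(fineK V_num) -(fineK B_num) -(fineK J_num) -!EFinM -EFinD lee_fin.
have -> : t * fine V + fine B / t = 2 * (t / 2 * fine V + (2 * t)^-1 * fine B).
  by field; rewrite gt_eqF.
lra.
Qed.

Lemma normr_RintegralB_Rev_le :
  `| Rintegral D setT (fun z => Rev (pi z) (v z) (fun i => tnth z.2 i))
     - Rintegral D setT (fun z => Rev (pi z) (v' z) (fun i => tnth z.2 i)) |
  <= Num.sqrt (fine (dispersion D q pi))
     * Num.sqrt (Rintegral D setT (fun z =>
         \sum_S q z S * \sum_(i in S) (v z i - v' z i) ^+ 2)).
Proof.
have iv := integrable_Rev mv v0; have iv' := integrable_Rev mv' v'0.
rewrite -RintegralB //; apply: le_trans (le_normr_Rintegral _ _) _ => //.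
  exact: integrableB iv iv'.
apply: le_sqrt_mul_AMGM; first exact/fine_ge0/dispersion_ge0.
  by apply: Rintegral_ge0 => z _; exact: sq_gap_ge0.
exact: Rintegral_Rev_gap_le.
Qed.

End revenue_gap.

Unset Implicit Arguments.

Theorem lemma2 (R : realType) (N K : nat) (hK : (1 <= K <= N)%N)
  (d : measure_display) (X : measurableType d)
  (D : probability (X * N.-tuple R)%type R)
  (hD : D [set z | forall i : 'I_N, 0 <= tnth z.2 i <= 1] = 1%E)
  (f fstar : X -> 'I_N -> R)
  (hf : forall x i, 0 <= f x i <= 1) (hfstar : forall x i, 0 <= fstar x i <= 1)
  (mf : forall i, measurable_fun setT (fun x => f x i))
  (mfstar : forall i, measurable_fun setT (fun x => fstar x i))
  (q : X * N.-tuple R -> {ffun {set 'I_N} -> R})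
  (hq : forall z, is_distS K (q z))
  (mq : forall S, measurable_fun setT (fun z => q z S))
  (pi : X * N.-tuple R -> {set 'I_N})
  (hpi : forall z, validS K (pi z))
  (mpi : forall S, measurable (pi @^-1` [set S]))
  (hV : (dispersion D q pi < +oo)%E) :
  `| Rintegral D setT (fun z => Rev (pi z) (f z.1) (fun i => tnth z.2 i))
     - Rintegral D setT (fun z => Rev (pi z) (fstar z.1) (fun i => tnth z.2 i)) |
  <= Num.sqrt (fine (dispersion D q pi))
     * Num.sqrt (Rintegral D setT (fun z =>
         \sum_(S : {set 'I_N}) q z S * \sum_(i in S) (f z.1 i - fstar z.1 i) ^+ 2)).
Proof.
have q0 z S : 0 <= q z S by case: (hq z) => /(_ S).
have q1 z : \sum_S q z S = 1 by case: (hq z) => _ [].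
have f01 (z : X * N.-tuple R) i : 0 <= f z.1 i <= 1 := hf z.1 i.
have fstar01 (z : X * N.-tuple R) i : 0 <= fstar z.1 i <= 1 := hfstar z.1 i.
have mf1 i : measurable_fun setT (fun z : X * N.-tuple R => f z.1 i).
  exact: measurableT_comp (mf i) measurable_fst.
have mfstar1 i : measurable_fun setT (fun z : X * N.-tuple R => fstar z.1 i).
  exact: measurableT_comp (mfstar i) measurable_fst.
apply: normr_RintegralB_Rev_le => //.
- by move=> z i; have /andP[] := f01 z i.
- by move=> z i; have /andP[] := fstar01 z i.
apply: integral_sq_gap_lt_pinfty => // z i.
have /andP[f0 f1] := f01 z i; have /andP[fs0 fs1] := fstar01 z i.
by rewrite ler_norml; apply/andP; split; lra.
Qed.
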